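(* Fix $P_L$ to be either the Alexander polynomial of $L$ for every link $L$, or the Jones polynomial of $L$ for every link $L$. For integers $t,n$, the set $X'_{t,n}$ equals the set of all isotopy classes of links $L$ of braid index three such that $e(L)=n$ and $P_L(-1)=i^n(t-2)$.
   Context: $B_3=\langle\sigma_1,\sigma_2:\sigma_1\sigma_2\sigma_1=\sigma_2\sigma_1\sigma_2\rangle$; $\phi:B_3\to\mathrm{SL}_2(\mathbb{Z})$ is given by $\phi(\sigma_1)=\begin{bmatrix}1&1\\0&1\end{bmatrix}$, $\phi(\sigma_2)=\begin{bmatrix}1&0\\-1&1\end{bmatrix}$; $\epsilon:B_3\to\mathbb{Z}$ is the exponent sum. For a link $L$ of braid index three, $e(L)$ is the writhe of the closure diagram of any $g\in B_3$ with closure $L$ (i.e. $\epsilon(g)$), which depends only on $L$. $X'_{t,n}$ is the set of isotopy classes of links $L$ of braid index three such that $e(L)=n$ and $i^{\epsilon(g)}(\mathrm{tr}(\phi(g))-2)=i^n(t-2)$ for a (equivalently any) $g\in B_3$ with closure $L$; here $i=\sqrt{-1}$. The Alexander polynomial $\Delta_L$ and Jones polynomial $V_L$ are normalized as in Jones (Ann. of Math. 1987): with $\beta_3$ the reduced Burau representation $\beta_3(\sigma_1)=\begin{bmatrix}1&-q\\0&-q\end{bmatrix}$, $\beta_3(\sigma_2)=\begin{bmatrix}-q&0\\-1&1\end{bmatrix}$, the closure $\overline g$ of $g\in B_3$ satisfies $\Delta_{\overline g}(q)=\left(-\tfrac{1}{\sqrt q}\right)^{\epsilon(g)-2}\frac{1-\mathrm{tr}(\beta_3(g))+(-q)^{\epsilon(g)}}{1+q+q^2}$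 and $V_{\overline g}(q)=\sqrt{q}^{\,\epsilon(g)}\left(q+q^{-1}+\mathrm{tr}(\beta_3(g))\right)$; $P_L(-1)$ denotes evaluation at $q=-1$ with $\sqrt q=i$. *)

From HB Require Import structures.
From mathcomp Require Import all_boot all_order all_algebra all_field.
Set Implicit Arguments. Unset Strict Implicit. Unset Printing Implicit Defensive.
Import Order.TTheory GRing.Theory Num.Theory.
Local Open Scope ring_scope.

(* A braid word in B_3: each letter is (g, inv) where g = false means sigma_1,
   g = true means sigma_2, and inv = true means the inverse generator.
   The word [:: x1; ...; xk] denotes the product x1 x2 ... xk. *)
Definition word := seq (bool * bool).

Definition eps (w : word) : int := \sum_(x <- w) (if x.2 then (-1)%R else 1%R).

Definition mx2 {R : pzRingType} (a b c d : R) : 'M[R]_2 :=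
  \matrix_(i < 2, j < 2)
    if i == ord0 then (if j == ord0 then a else b) else (if j == ord0 then c else d).

Definition phi_gen (x : bool * bool) : 'M[int]_2 :=
  match x with
  | (false, false) => mx2 1 1 0 1
  | (false, true)  => mx2 1 (-1) 0 1
  | (true, false)  => mx2 1 0 (-1) 1
  | (true, true)   => mx2 1 0 1 1
  end.
Definition phi (w : word) : 'M[int]_2 := foldr (fun x M => phi_gen x *m M) 1%:M w.

(* reduced Burau representation beta_3 evaluated at q *)
Definition beta_gen (q : algC) (x : bool * bool) : 'M[algC]_2 :=
  let M := if x.1 then mx2 (-q) 0 (-1) 1 else mx2 1 (-q) 0 (-q) in
  if x.2 then invmx M else M.
Definition beta (q : algC) (w : word) : 'M[algC]_2 :=
  foldr (fun x M => beta_gen q x *m M) 1%:M w.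

(* Jones' formulas, written in the variable s = sqrt q (so q = s^2). *)
Definition Alexander_formula (s : algC) (w : word) : algC :=
  (- s^-1) ^ (eps w - 2) * (1 - \tr (beta (s ^+ 2) w) + (- s ^+ 2) ^ (eps w))
    / (1 + s ^+ 2 + s ^+ 4).
Definition Jones_formula (s : algC) (w : word) : algC :=
  s ^ (eps w) * (s ^+ 2 + (s ^+ 2)^-1 + \tr (beta (s ^+ 2) w)).

Definition Xprime (Link : Type) (cl : word -> Link) (e : Link -> int)
    (t n : int) (L : Link) : Prop :=
  e L = n /\ exists g, cl g = L /\
    'i ^ (eps g) * ((\tr (phi g))%:~R - 2) = 'i ^ n * (t%:~R - 2 : algC).

From HB Require Import structures.
From mathcomp Require Import all_boot all_order all_algebra all_field.
From mathcomp Require Import ring.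
Import Order.TTheory GRing.Theory Num.Theory.
Local Open Scope ring_scope.

(* At q = -1 the reduced Burau matrices of the generators and their inverses
   are exactly the integer matrices phi(sigma_i)^(+-1), so beta_3(g) at q = -1
   is phi(g).  With sqrt q = i, both Jones' formulas then collapse to
   i^eps(g) (tr phi(g) - 2), which is the quantity defining X'_{t,n}. *)

Lemma mx2_eta (R : pzRingType) (M : 'M[R]_2) :
  M = mx2 (M ord0 ord0) (M ord0 ord_max) (M ord_max ord0) (M ord_max ord_max).
Proof.
apply/matrixP => i j; rewrite !mxE.
by case: i => [[|[|//]] ?]; case: j => [[|[|//]] ?]; congr (M _ _); apply/val_inj.
Qed.

Lemma mul_mx2 (R : pzRingType) (a b c d a' b' c' d' : R) :
  mx2 a b c d *m mx2 a' b' c' d' =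
  mx2 (a * a' + b * c') (a * b' + b * d') (c * a' + d * c') (c * b' + d * d').
Proof.
by rewrite [LHS]mx2_eta !mxE !big_ord_recr !big_ord0 /= !mxE /= !add0r.
Qed.

Lemma one_mx2 (R : pzRingType) : 1%:M = mx2 1 0 0 1 :> 'M[R]_2.
Proof. by rewrite [LHS]mx2_eta !mxE. Qed.

Lemma map_mx2 (R S : pzRingType) (f : R -> S) (a b c d : R) :
  map_mx f (mx2 a b c d) = mx2 (f a) (f b) (f c) (f d).
Proof. by rewrite [LHS]mx2_eta !mxE. Qed.

Lemma invmx_mulmx1 (R : comUnitRingType) n (M N : 'M[R]_n) :
  M *m N = 1%:M -> invmx M = N.
Proof.
move=> MN1; have [Munit _] := mulmx1_unit MN1.
by rewrite -[invmx M]mulmx1 -MN1 mulmxA mulVmx // mul1mx.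
Qed.

Lemma beta_gen_m1 x : beta_gen (-1) x = map_mx intr (phi_gen x).
Proof.
case: x => [[] []]; rewrite /beta_gen /= map_mx2 ?opprK //.
- rewrite (@invmx_mulmx1 _ _ _ (mx2 1 0 1 1)); first by congr mx2.
  by rewrite mul_mx2 one_mx2; congr mx2; ring.
- rewrite (@invmx_mulmx1 _ _ _ (mx2 1 (-1) 0 1)); first by congr mx2.
  by rewrite mul_mx2 one_mx2; congr mx2; ring.
Qed.

Lemma beta_m1 w : beta (-1) w = map_mx intr (phi w).
Proof.
elim: w => [|x w IHw]; first by rewrite map_mx1.
by rewrite /beta /phi /= -/(beta _ _) -/(phi _) IHw beta_gen_m1 map_mxM.
Qed.

Lemma trace_beta_sqrCi w : \tr (beta ('i ^+ 2) w) = (\tr (phi w))%:~R.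
Proof. by rewrite sqrCi beta_m1 trace_map_mx. Qed.

Lemma Jones_formula_i w :
  Jones_formula 'i w = 'i ^ (eps w) * ((\tr (phi w))%:~R - 2).
Proof.
by rewrite /Jones_formula trace_beta_sqrCi sqrCi invrN invr1; congr (_ * _); ring.
Qed.

Lemma Alexander_formula_i w :
  Alexander_formula 'i w = 'i ^ (eps w) * ((\tr (phi w))%:~R - 2).
Proof.
have i_unit : ('i : algC) \is a GRing.unit by rewrite unitfE neq0Ci.
have oppVi : - ('i : algC)^-1 = 'i.
  by apply: (mulIr i_unit); rewrite mulNr mulVr // -expr2 sqrCi.
have i4 : ('i : algC) ^+ 4 = 1 by rewrite (exprM _ 2 2) sqrCi sqrrN expr1n.
have im2 : ('i : algC) ^ (-2) = -1 by rewrite -(exprnN _ 2) sqrCi invrN invr1.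
rewrite /Alexander_formula trace_beta_sqrCi oppVi sqrCi opprK exp1rz i4.
by rewrite exprzDr // im2 (_ : 1 - 1 + 1 = 1 :> algC) ?divr1; ring.
Qed.

Lemma Xprime_iff_value_i (Link : Type) (cl : word -> Link)
    (cl_surj : forall L : Link, exists g, cl g = L)
    (e : Link -> int) (P : Link -> algC -> algC)
    (HP : forall g, P (cl g) 'i = 'i ^ (eps g) * ((\tr (phi g))%:~R - 2))
    (t n : int) (L : Link) :
  Xprime cl e t n L <-> (e L = n /\ P L 'i = 'i ^ n * (t%:~R - 2)).
Proof.
split=> [[eL [g [gL Hg]]] | [eL HL]]; first by split=> //; rewrite -gL HP.
split=> //; have [g gL] := cl_surj L.
by exists g; split=> //; rewrite -HP gL.
Qed.

Theorem lemma5p1 (Link : Type) (cl : word -> Link)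
  (cl_surj : forall L : Link, exists g, cl g = L)
  (e : Link -> int) (he : forall g, e (cl g) = eps g)
  (Delta V : Link -> algC -> algC)
  (hDelta : forall g (s : algC), s != 0 -> 1 + s ^+ 2 + s ^+ 4 != 0 ->
     Delta (cl g) s = Alexander_formula s g)
  (hV : forall g (s : algC), s != 0 -> V (cl g) s = Jones_formula s g)
  (t n : int) :
  (forall L : Link, Xprime cl e t n L <-> (e L = n /\ Delta L 'i = 'i ^ n * (t%:~R - 2)))
  /\
  (forall L : Link, Xprime cl e t n L <-> (e L = n /\ V L 'i = 'i ^ n * (t%:~R - 2))).
Proof.
have i_neq0 := @neq0Ci algC.
have Alexander_denom_i : 1 + ('i : algC) ^+ 2 + 'i ^+ 4 != 0.
  by rewrite (exprM _ 2 2) sqrCi sqrrN expr1n addrNK oner_eq0.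
split=> L; apply: Xprime_iff_value_i => // g.
- by rewrite hDelta // Alexander_formula_i.
- by rewrite hV // Jones_formula_i.
Qed.
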